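(* Let $d \geq 2$ be an integer and let $Z, U$ be independent random variables with $Z \sim N(0,1)$ and $U \sim \chi^2_d$ (chi-squared with $d$ degrees of freedom). Then for all $\delta > 0$, $p > 0$ and all integers $k \geq 1$, $$\frac{1}{2}\, \mathbb{P}\left( \tfrac{1}{4} Z^2 \geq U \geq \delta^2 \right) k^{-d/p} \;\leq\; \mathbb{P}\left( \delta + \sqrt{U}\sqrt{k^{2/p} - 1} < Z \right) \;\leq\; \frac{ e^{-(1+\delta^2)/2}\, p }{ 2\delta^2 \sqrt{d} } \cdot \frac{ k^{(1-d)/p} }{ \ln k },$$ where for $k=1$ the right-hand side is interpreted as $+\infty$. *)

From Stdlib Require Import Reals Lra ClassicalEpsilon ClassicalDescription.
Open Scope R_scope.

Definition ind (P : Prop) : R :=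
  if excluded_middle_informative P then 1 else 0.

Definition is_int_R (f : R -> R) (l : R) : Prop :=
  (forall a b, a <= b -> inhabited (Riemann_integrable f a b)) /\
  (forall eps, 0 < eps -> exists M, 0 < M /\
     forall a b (pr : Riemann_integrable f a b),
       a <= - M -> M <= b -> Rabs (RiemannInt pr - l) < eps).

Definition is_int_pos (f : R -> R) (l : R) : Prop :=
  (forall b, 0 <= b -> inhabited (Riemann_integrable f 0 b)) /\
  (forall eps, 0 < eps -> exists M, 0 < M /\
     forall b (pr : Riemann_integrable f 0 b),
       M <= b -> Rabs (RiemannInt pr - l) < eps).

Definition phi (z : R) : R := exp (- z ^ 2 / 2) / sqrt (2 * PI).

(* Unnormalized chi-squared density with d degrees of freedom on u >= 0:
   u^(d/2 - 1) e^(-u/2), written as (sqrt u)^(d-2) for d >= 2.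
   The normalizing constant 2^(d/2) Gamma(d/2) is taken to be its integral. *)
Definition chisq_unnorm (d : nat) (u : R) : R :=
  sqrt u ^ (d - 2) * exp (- u / 2).

(* is_prob d A l : for independent Z ~ N(0,1) and U ~ chi^2_d,
   P(A Z U) = l, computed as
   (1/N) * int_0^oo chisq_unnorm d u * (int_R phi z * 1_{A z u} dz) du,
   with N = int_0^oo chisq_unnorm d. *)
Definition is_prob (d : nat) (A : R -> R -> Prop) (l : R) : Prop :=
  exists (N : R) (h : R -> R) (I : R),
    is_int_pos (chisq_unnorm d) N /\ 0 < N /\
    (forall u, 0 <= u -> is_int_R (fun z => phi z * ind (A z u)) (h u)) /\
    is_int_pos (fun u => chisq_unnorm d u * h u) I /\
    l = I / N.

(* Let q = k^(1/p) and write T for the standard normal tail. Given U = u, the two events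
   have probabilities T(delta + sqrt u sqrt(q^2 - 1)) and 2 T(2 sqrt u) 1[u >= delta^2].

   Lower bound: substitute u = v / q^2 in the outer integral. Since sqrt(q^2 - 1) / q <= 1 and
   delta <= sqrt v on the event, the shifted tail dominates T(2 sqrt v), while the chi-squared
   density loses at most the factor q^(-d).

   Upper bound: substitute u = w^2 and use Mills' ratio T(x) <= phi(x) / x, bounding the cross
   term e^(-delta t w) by e^(-1) / (delta t w). What remains is the Gaussian moment integral of
   w^(d-2) e^(-q^2 w^2 / 2) = q^(1-d) times its value at q = 1, and that moment is compared with
   the normalising constant (a moment of one order higher) by integration by parts and AM-GM.
   Finally ln k = p ln q and q^2 - 1 >= 3/2 (ln q)^2. *)

From Pilot Require Import Defs.
From Stdlib Require Import Reals Lra Lia ClassicalEpsilon ClassicalDescription FunctionalExtensionality.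
From Coquelicot Require Import Coquelicot.
Open Scope R_scope.

Lemma continuous_pow_comp (f : R -> R) x n :
  continuous f x -> continuous (fun y => f y ^ n) x.
Proof.
  intros Hf; induction n as [|n IH]; simpl.
  - apply continuous_const.
  - apply (continuous_mult (K:=R_AbsRing)); auto.
Qed.

Ltac continuity_R :=
  repeat (cbv beta; match goal with
  | |- continuous (fun _ => ?c) _ => apply continuous_const
  | |- continuous (fun y => y) _ => apply continuous_id
  | |- continuous sqrt _ => apply continuous_sqrt
  | H : forall z, continuous ?g z |- continuous ?g _ => apply H
  | H : forall z, continuous ?g z |- continuous (fun y => ?g _) _ =>
      apply (continuous_comp _ g); [| apply H]
  (* [apply] of the composition lemmas may leave eta-reduced functions *)
  | |- continuous Ropp ?x => change (continuous (fun y => - y) x)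
  | |- continuous exp ?x => change (continuous (fun y => exp y) x)
  | |- continuous (Rminus ?a) ?x => change (continuous (fun y => a - y) x)
  | |- continuous (Rplus ?a) ?x => change (continuous (fun y => a + y) x)
  | |- continuous (Rmult ?a) ?x => change (continuous (fun y => a * y) x)
  | |- continuous (fun y => _ + _) _ => apply (continuous_plus (V:=R_NormedModule))
  | |- continuous (fun y => _ - _) _ => unfold Rminus
  | |- continuous (fun y => - _) _ => apply (continuous_opp (V:=R_NormedModule))
  | |- continuous (fun y => _ * _) _ => apply (continuous_mult (K:=R_AbsRing))
  | |- continuous (fun y => _ / _) _ => apply (continuous_mult (K:=R_AbsRing))
  | |- continuous (fun y => exp _) _ => apply continuous_exp_comp
  | |- continuous (fun y => sqrt _) _ => apply continuous_sqrt_comp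
  | |- continuous (fun y => _ ^ _) _ => apply continuous_pow_comp
  end).

Lemma ex_RInt_continuous_R (f : R -> R) a b :
  (forall z, continuous f z) -> ex_RInt f a b.
Proof. intros Hf; apply (ex_RInt_continuous (V:=R_CompleteNormedModule)); auto. Qed.

Lemma ex_RInt_Chasles_1_R (f : R -> R) a b c : a <= b <= c -> ex_RInt f a c -> ex_RInt f a b.
Proof. intros; apply (ex_RInt_Chasles_1 (V:=R_CompleteNormedModule)) with c; auto. Qed.

Lemma ex_RInt_Chasles_2_R (f : R -> R) a b c : a <= b <= c -> ex_RInt f a c -> ex_RInt f b c.
Proof. intros; apply (ex_RInt_Chasles_2 (V:=R_CompleteNormedModule)) with a; auto. Qed.

Lemma RInt_Chasles_R (f : R -> R) a b c :
  ex_RInt f a b -> ex_RInt f b c -> RInt f a b + RInt f b c = RInt f a c :> R.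
Proof. intros; apply (RInt_Chasles (V:=R_CompleteNormedModule)); auto. Qed.

Lemma RInt_swap_R (f : R -> R) a b : ex_RInt f a b -> RInt f b a = - RInt f a b :> R.
Proof. intros H; exact (eq_sym (opp_RInt_swap (V:=R_CompleteNormedModule) f a b H)). Qed.

Lemma RInt_scal_R (f : R -> R) a b c :
  ex_RInt f a b -> RInt (fun x => c * f x) a b = c * RInt f a b :> R.
Proof. intros; apply (RInt_scal (V:=R_CompleteNormedModule)); auto. Qed.

Lemma RInt_derive_R (f df : R -> R) a b :
  (forall x, is_derive f x (df x)) -> (forall x, continuous df x) ->
  RInt df a b = f b - f a :> R.
Proof.
  intros Hd Hc. apply (is_RInt_unique (V:=R_CompleteNormedModule)).
  apply (is_RInt_derive (V:=R_CompleteNormedModule)); auto.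
Qed.

Lemma RInt_comp_lin_R (f : R -> R) (c b : R) :
  (forall z, continuous f z) ->
  RInt (fun x => c * f (c * x)) 0 b = RInt f 0 (c * b) :> R.
Proof.
  intros Hf.
  rewrite <- (Rmult_0_r c) at 2. rewrite <- (Rplus_0_r (c * 0)), <- (Rplus_0_r (c * b)).
  rewrite <- (RInt_comp_lin (V:=R_CompleteNormedModule)) by (apply ex_RInt_continuous_R; auto).
  apply RInt_ext. intros x _. rewrite Rplus_0_r. reflexivity.
Qed.

Lemma RInt_nondecreasing (f : R -> R) a x y :
  a <= x -> x <= y -> ex_RInt f a y -> (forall z, x < z < y -> 0 <= f z) ->
  RInt f a x <= RInt f a y.
Proof.
  intros Hax Hxy Hi Hp.
  assert (Hi1 : ex_RInt f a x) by (apply ex_RInt_Chasles_1_R with y; lra || auto).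
  assert (Hi2 : ex_RInt f x y) by (apply ex_RInt_Chasles_2_R with a; lra || auto).
  rewrite <- (RInt_Chasles_R f a x y Hi1 Hi2).
  assert (0 <= RInt f x y) by (apply RInt_ge_0; auto).
  lra.
Qed.

(** * Improper integrals *)

Lemma nondecreasing_bounded_lim (F : R -> R) (a B : R) :
  (forall x y, a <= x -> x <= y -> F x <= F y) -> (forall x, a <= x -> F x <= B) ->
  exists L, (forall x, a <= x -> F x <= L) /\
    (forall eps, 0 < eps -> exists M, a <= M /\ forall x, M <= x -> L - eps < F x).
Proof.
  intros Hmono HB.
  set (E := fun y => exists x, a <= x /\ y = F x).
  assert (Hbound : bound E) by (exists B; intros y [x [Hx ->]]; auto).
  assert (Hne : exists y, E y) by (exists (F a), a; split; lra).
  destruct (completeness E Hbound Hne) as [L [HLub HLleast]].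
  exists L; split.
  - intros x Hx. apply HLub. exists x; auto.
  - intros eps Heps.
    destruct (Classical_Prop.classic (exists x, a <= x /\ L - eps < F x)) as [[x [Hx HFx]]|Hnone].
    + exists x. split; auto. intros y Hy. specialize (Hmono x y Hx Hy). lra.
    + assert (L <= L - eps); [|lra].
      apply HLleast. intros y [x [Hx ->]].
      destruct (Rle_or_lt (F x) (L - eps)); auto.
      exfalso; apply Hnone; exists x; auto.
Qed.

Lemma is_int_pos_of_bounded (f : R -> R) (B : R) :
  (forall b, 0 <= b -> ex_RInt f 0 b) -> (forall x, 0 <= x -> 0 <= f x) ->
  (forall b, 0 <= b -> RInt f 0 b <= B) ->
  exists L, is_int_pos f L.
Proof.
  intros Hi Hpos HB.
  destruct (nondecreasing_bounded_lim (fun b => RInt f 0 b) 0 B) as [L [HLub HLlim]].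
  { intros x y Hx Hy. apply RInt_nondecreasing; auto. apply Hi; lra. intros z Hz; apply Hpos; lra. }
  { auto. }
  exists L; split.
  - intros b Hb. constructor. apply ex_RInt_Reals_0. auto.
  - intros eps Heps. destruct (HLlim eps Heps) as [M [HM HMlim]].
    exists (M + 1); split; [lra|].
    intros b pr Hb. rewrite <- RInt_Reals.
    specialize (HMlim b ltac:(lra)). specialize (HLub b ltac:(lra)).
    apply Rabs_def1; lra.
Qed.

Section ImproperIntegralPos.

Variables (f : R -> R) (L : R).
Hypothesis HL : is_int_pos f L.

Lemma is_int_pos_ex_RInt b : 0 <= b -> ex_RInt f 0 b.
Proof. intros Hb. destruct (proj1 HL b Hb) as [pr]. apply ex_RInt_Reals_1; auto. Qed.

Lemma is_int_pos_lim eps : 0 < eps ->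
  exists M, 0 < M /\ forall b, M <= b -> Rabs (RInt f 0 b - L) < eps.
Proof.
  intros Heps. destruct (proj2 HL eps Heps) as [M [HM HMlim]].
  exists M; split; auto. intros b Hb.
  pose proof (ex_RInt_Reals_0 f 0 b (is_int_pos_ex_RInt b ltac:(lra))) as pr.
  rewrite (RInt_Reals f 0 b pr). auto.
Qed.

Lemma is_int_pos_approx eps : 0 < eps -> exists b, 0 <= b /\ L - eps < RInt f 0 b.
Proof.
  intros Heps. destruct (is_int_pos_lim eps Heps) as [M [HM HMlim]].
  exists M; split; [lra|]. specialize (HMlim M (Rle_refl _)). apply Rabs_def2 in HMlim. lra.
Qed.

Lemma RInt_le_is_int_pos b : (forall x, 0 <= x -> 0 <= f x) -> 0 <= b -> RInt f 0 b <= L.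
Proof.
  intros Hpos Hb.
  destruct (Rle_or_lt (RInt f 0 b) L) as [|Hlt]; auto. exfalso.
  destruct (is_int_pos_lim (RInt f 0 b - L) ltac:(lra)) as [M [HM HMlim]].
  specialize (HMlim (Rmax b M) (Rmax_r _ _)).
  assert (RInt f 0 b <= RInt f 0 (Rmax b M)).
  { apply RInt_nondecreasing; auto. apply Rmax_l.
    apply is_int_pos_ex_RInt. pose proof (Rmax_l b M); lra.
    intros z Hz; apply Hpos; lra. }
  apply Rabs_def2 in HMlim. lra.
Qed.

Lemma is_int_pos_le C : (forall b, 0 <= b -> RInt f 0 b <= C) -> L <= C.
Proof.
  intros HC. destruct (Rle_or_lt L C) as [|Hlt]; auto. exfalso.
  destruct (is_int_pos_lim (L - C) ltac:(lra)) as [M [HM HMlim]].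
  specialize (HMlim M (Rle_refl _)). specialize (HC M ltac:(lra)).
  apply Rabs_def2 in HMlim. lra.
Qed.

Lemma is_int_pos_scal_le c C : 0 < c -> (forall b, 0 <= b -> c * RInt f 0 b <= C) -> c * L <= C.
Proof.
  intros Hc HC. destruct (Rle_or_lt (c * L) C) as [|Hlt]; [auto|]. exfalso.
  destruct (is_int_pos_approx ((c * L - C) / c)) as [b [Hb Happrox]].
  { apply Rdiv_lt_0_compat; lra. }
  specialize (HC b Hb).
  apply (Rmult_lt_compat_l c) in Happrox; auto.
  replace (c * (L - (c * L - C) / c)) with C in Happrox by (field; lra). lra.
Qed.

End ImproperIntegralPos.

Definition lim_pinfty (F : R -> R) (L : R) :=
  forall eps, 0 < eps -> exists M, forall x, M <= x -> Rabs (F x - L) < eps.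
Definition lim_minfty (F : R -> R) (L : R) :=
  forall eps, 0 < eps -> exists M, forall x, x <= M -> Rabs (F x - L) < eps.

Lemma lim_pinfty_plus F G a b :
  lim_pinfty F a -> lim_pinfty G b -> lim_pinfty (fun x => F x + G x) (a + b).
Proof.
  intros HF HG eps Heps.
  destruct (HF (eps/2) ltac:(lra)) as [M1 H1]. destruct (HG (eps/2) ltac:(lra)) as [M2 H2].
  exists (Rmax M1 M2). intros x Hx. pose proof (Rmax_l M1 M2); pose proof (Rmax_r M1 M2).
  specialize (H1 x ltac:(lra)); specialize (H2 x ltac:(lra)).
  apply Rabs_def2 in H1; apply Rabs_def2 in H2. apply Rabs_def1; lra.
Qed.

Lemma lim_minfty_plus F G a b :
  lim_minfty F a -> lim_minfty G b -> lim_minfty (fun x => F x + G x) (a + b).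
Proof.
  intros HF HG eps Heps.
  destruct (HF (eps/2) ltac:(lra)) as [M1 H1]. destruct (HG (eps/2) ltac:(lra)) as [M2 H2].
  exists (Rmin M1 M2). intros x Hx. pose proof (Rmin_l M1 M2); pose proof (Rmin_r M1 M2).
  specialize (H1 x ltac:(lra)); specialize (H2 x ltac:(lra)).
  apply Rabs_def2 in H1; apply Rabs_def2 in H2. apply Rabs_def1; lra.
Qed.

Lemma is_int_R_of_primitive (f P Q : R -> R) Lp Lq :
  (forall a b, a <= b -> ex_RInt f a b) ->
  (forall a b, a <= b -> RInt f a b = P b - Q a) ->
  lim_pinfty P Lp -> lim_minfty Q Lq -> is_int_R f (Lp - Lq).
Proof.
  intros Hi Hf HP HQ. split.
  - intros a b Hab. constructor. apply ex_RInt_Reals_0. auto.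
  - intros eps Heps.
    destruct (HP (eps/2) ltac:(lra)) as [M1 HM1].
    destruct (HQ (eps/2) ltac:(lra)) as [M2 HM2].
    exists (Rabs M1 + Rabs M2 + 1).
    pose proof (Rle_abs M1); pose proof (Rabs_pos M1); pose proof (Rabs_pos M2).
    pose proof (Rle_abs (- M2)); rewrite Rabs_Ropp in *.
    split; [lra|].
    intros a b pr Ha Hb. rewrite <- RInt_Reals, Hf by lra.
    specialize (HM1 b ltac:(lra)). specialize (HM2 a ltac:(lra)).
    apply Rabs_def2 in HM1; apply Rabs_def2 in HM2. apply Rabs_def1; lra.
Qed.

Lemma is_int_R_ext (f g : R -> R) l : (forall z, f z = g z) -> is_int_R f l -> is_int_R g l.
Proof. intros E H. replace g with f; auto. apply functional_extensionality; auto. Qed.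

(** * The Gaussian tail *)

Lemma exp_le_exp (x y : R) : x <= y -> exp x <= exp y.
Proof. intros [H|H]; [left; apply exp_increasing; auto | subst; lra]. Qed.

Lemma sqrt2PI_pos : 0 < sqrt (2 * PI).
Proof. apply sqrt_lt_R0. pose proof PI_RGT_0; lra. Qed.

Lemma phi_pos z : 0 < phi z.
Proof. apply Rdiv_lt_0_compat; [apply exp_pos | apply sqrt2PI_pos]. Qed.

Lemma phi_even z : phi (- z) = phi z.
Proof. unfold phi. replace ((- z) ^ 2) with (z ^ 2) by ring. reflexivity. Qed.

Lemma phi_continuous x : continuous phi x.
Proof. unfold phi. continuity_R. Qed.

Lemma ex_RInt_phi a b : ex_RInt phi a b.
Proof. apply ex_RInt_continuous_R, phi_continuous. Qed.

Lemma is_derive_phi x : is_derive phi x (- x * phi x).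
Proof.
  unfold phi. auto_derive; auto.
  replace (- (x * (x * 1)) * / 2) with (- x ^ 2 / 2) by (unfold Rdiv; ring).
  field. apply Rgt_not_eq, sqrt2PI_pos.
Qed.

Definition Phi0 (x : R) : R := RInt phi 0 x.

Lemma RInt_phi a b : RInt phi a b = Phi0 b - Phi0 a.
Proof.
  unfold Phi0. rewrite <- (RInt_Chasles_R phi 0 a b) by apply ex_RInt_phi.
  rewrite (RInt_swap_R phi a 0) by apply ex_RInt_phi. lra.
Qed.

Lemma Phi0_nondecreasing x y : x <= y -> Phi0 x <= Phi0 y.
Proof.
  intros Hxy. assert (0 <= RInt phi x y).
  { apply RInt_ge_0; auto. apply ex_RInt_phi. intros; left; apply phi_pos. }
  rewrite RInt_phi in H. lra.
Qed.

Lemma Phi0_0 : Phi0 0 = 0.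
Proof. unfold Phi0. rewrite RInt_point. reflexivity. Qed.

Lemma Phi0_odd x : Phi0 (- x) = - Phi0 x.
Proof.
  unfold Phi0. replace (- x) with (-1 * x) by ring.
  rewrite <- (RInt_comp_lin_R phi (-1) x phi_continuous).
  rewrite RInt_scal_R by (apply ex_RInt_continuous_R; intros; apply (continuous_comp (fun y => -1 * y)); [continuity_R | apply phi_continuous]).
  replace (RInt (fun y => phi (-1 * y)) 0 x) with (RInt phi 0 x); [ring|].
  apply RInt_ext. intros y _. replace (-1 * y) with (- y) by ring. now rewrite phi_even.
Qed.

Lemma Phi0_bounded b : Phi0 b <= exp (1/2) / sqrt (2 * PI).
Proof.
  destruct (Rle_or_lt b 0) as [Hb|Hb].
  { pose proof (Phi0_nondecreasing b 0 Hb). rewrite Phi0_0 in H.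
    pose proof (Rdiv_lt_0_compat _ _ (exp_pos (1/2)) sqrt2PI_pos). lra. }
  set (g := fun z => exp (1/2 - z) / sqrt (2 * PI)).
  (* [phi z <= g z] since [(z - 1)^2 >= 0]; [g] has primitive [- g]. *)
  assert (Hint : RInt g 0 b = g 0 - g b :> R).
  { rewrite (RInt_derive_R (fun z => - g z)).
    - ring.
    - intros x. unfold g. auto_derive; auto.
      replace (exp (1 / 2 + - x)) with (exp (1/2 - x)) by (f_equal; ring).
      field. apply Rgt_not_eq, sqrt2PI_pos.
    - intros x. unfold g. continuity_R. }
  assert (RInt phi 0 b <= RInt g 0 b).
  { apply RInt_le; [lra | apply ex_RInt_phi | apply ex_RInt_continuous_R; intros; unfold g; continuity_R |].
    intros x _. unfold phi, g, Rdiv. apply Rmult_le_compat_r.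
    - left; apply Rinv_0_lt_compat, sqrt2PI_pos.
    - apply exp_le_exp. pose proof (pow2_ge_0 (x - 1)). lra. }
  assert (0 < g b) by (apply Rdiv_lt_0_compat; [apply exp_pos | apply sqrt2PI_pos]).
  unfold Phi0. unfold g in *. replace (1/2 - 0) with (1/2) in Hint by ring. lra.
Qed.

Lemma Phi0_has_lim : { H : R | (forall b, Phi0 b <= H) /\ lim_pinfty Phi0 H }.
Proof.
  apply constructive_indefinite_description.
  destruct (nondecreasing_bounded_lim Phi0 0 (exp (1/2) / sqrt (2 * PI))) as [L [HLub HLlim]].
  { intros; apply Phi0_nondecreasing; auto. }
  { intros; apply Phi0_bounded. }
  exists L; split.
  - intros b. destruct (Rle_or_lt 0 b) as [Hb|Hb]; [auto|].
    apply Rle_trans with (Phi0 0); [apply Phi0_nondecreasing; lra | apply HLub; lra].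
  - intros eps Heps. destruct (HLlim eps Heps) as [M [HM HMlim]]. exists M. intros x Hx.
    specialize (HMlim x Hx). specialize (HLub x ltac:(lra)). apply Rabs_def1; lra.
Qed.

(* [Phi0_inf] is [1/2]; its value is never needed. *)
Definition Phi0_inf := proj1_sig Phi0_has_lim.

Lemma Phi0_le_inf b : Phi0 b <= Phi0_inf.
Proof. apply (proj1 (proj2_sig Phi0_has_lim)). Qed.

Lemma Phi0_lim_pinfty : lim_pinfty Phi0 Phi0_inf.
Proof. apply (proj2 (proj2_sig Phi0_has_lim)). Qed.

Lemma Phi0_lim_minfty : lim_minfty Phi0 (- Phi0_inf).
Proof.
  intros eps Heps. destruct (Phi0_lim_pinfty eps Heps) as [M HM]. exists (- M). intros x Hx.
  replace x with (- - x) by ring. rewrite Phi0_odd.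
  replace (- Phi0 (- x) - - Phi0_inf) with (- (Phi0 (- x) - Phi0_inf)) by ring.
  rewrite Rabs_Ropp. apply HM. lra.
Qed.

Definition gauss_tail (x : R) := Phi0_inf - Phi0 x.

Lemma gauss_tail_nonneg x : 0 <= gauss_tail x.
Proof. unfold gauss_tail. pose proof (Phi0_le_inf x). lra. Qed.

Lemma gauss_tail_nonincreasing x y : x <= y -> gauss_tail y <= gauss_tail x.
Proof. unfold gauss_tail. intros H. pose proof (Phi0_nondecreasing x y H). lra. Qed.

Lemma gauss_tail_le_0 x : 0 <= x -> gauss_tail x <= gauss_tail 0.
Proof. apply gauss_tail_nonincreasing. Qed.

Lemma gauss_tail_continuous x : continuous gauss_tail x.
Proof.
  unfold gauss_tail. apply (continuous_minus (V:=R_NormedModule)); [apply continuous_const|].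
  apply (ex_derive_continuous (V:=R_NormedModule)). exists (phi x).
  apply (is_derive_RInt (V:=R_NormedModule) phi Phi0 0 x).
  - apply filter_forall. intros y. apply (RInt_correct (V:=R_CompleteNormedModule)), ex_RInt_phi.
  - apply phi_continuous.
Qed.

(* Mills' ratio bound: on [x, +oo), [phi z <= phi z * z / x] and [phi z * z] has primitive [- phi z]. *)
Lemma gauss_tail_le_mills x : 0 < x -> gauss_tail x <= phi x / x.
Proof.
  intros Hx.
  assert (Hb : forall b, x <= b -> RInt phi x b <= phi x / x).
  { intros b Hxb.
    assert (Hprim : RInt (fun z => phi z * z / x) x b = phi x / x - phi b / x :> R).
    { rewrite (RInt_derive_R (fun z => - phi z / x)); [field; lra | |].
      - intros y. apply (is_derive_ext (fun z => (-1 / x) * phi z)).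
        { intros t. change (-1 / x * phi t = - phi t / x :> R). field. lra. }
        replace (phi y * y / x) with ((-1 / x) * (- y * phi y)) by (field; lra).
        apply (is_derive_scal phi), is_derive_phi.
      - intros y. pose proof phi_continuous. continuity_R. }
    assert (RInt phi x b <= RInt (fun z => phi z * z / x) x b).
    { apply RInt_le; auto. apply ex_RInt_phi.
      apply ex_RInt_continuous_R. intros y. pose proof phi_continuous. continuity_R.
      intros z Hz. pose proof (phi_pos z).
      replace (phi z * z / x) with (phi z * (z / x)) by (unfold Rdiv; ring).
      rewrite <- (Rmult_1_r (phi z)) at 1. apply Rmult_le_compat_l; [lra|].
      apply Rmult_le_reg_r with x; auto. unfold Rdiv. rewrite Rmult_assoc, Rinv_l; lra. }
    pose proof (Rdiv_lt_0_compat _ _ (phi_pos b) Hx). lra. }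
  destruct (Rle_or_lt (gauss_tail x) (phi x / x)) as [|Hlt]; auto. exfalso.
  destruct (Phi0_lim_pinfty (gauss_tail x - phi x / x) ltac:(lra)) as [M HM].
  specialize (HM (Rmax M x) (Rmax_l _ _)). specialize (Hb (Rmax M x) (Rmax_r _ _)).
  rewrite RInt_phi in Hb. apply Rabs_def2 in HM. unfold gauss_tail in *. lra.
Qed.

(** * Gaussian integrals of indicators *)

Lemma ind_true (P : Prop) : P -> Defs.ind P = 1.
Proof. intros H. unfold Defs.ind. destruct (excluded_middle_informative P); tauto. Qed.

Lemma ind_false (P : Prop) : ~ P -> Defs.ind P = 0.
Proof. intros H. unfold Defs.ind. destruct (excluded_middle_informative P); tauto. Qed.

Lemma ind_bounds (P : Prop) : 0 <= Defs.ind P <= 1.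
Proof. unfold Defs.ind. destruct (excluded_middle_informative P); lra. Qed.

Lemma RInt_ext_open (f g : R -> R) a b :
  a <= b -> (forall x, a < x < b -> f x = g x) -> ex_RInt g a b ->
  ex_RInt f a b /\ RInt f a b = RInt g a b.
Proof.
  intros Hab Hfg Hg. split.
  - apply (ex_RInt_ext g); auto. intros x Hx.
    rewrite Rmin_left, Rmax_right in Hx by lra. symmetry; auto.
  - apply RInt_ext. intros x Hx. rewrite Rmin_left, Rmax_right in Hx by lra. auto.
Qed.

Lemma ex_RInt_0 a b : ex_RInt (fun _ => 0) a b.
Proof. apply ex_RInt_continuous_R. intros; apply continuous_const. Qed.

Lemma RInt_0 a b : RInt (fun _ => 0) a b = 0 :> R.
Proof. rewrite RInt_const. apply Rmult_0_r. Qed.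

Lemma RInt_phi_step_up (g : R -> R) y :
  (forall z, y < z -> g z = 1) -> (forall z, z < y -> g z = 0) ->
  forall a b, a <= b -> ex_RInt (fun z => phi z * g z) a b /\
    RInt (fun z => phi z * g z) a b = Phi0 (Rmax b y) - Phi0 (Rmax a y) :> R.
Proof.
  intros H1 H0 a b Hab.
  assert (Hphi : forall c e, c <= e -> y <= c ->
    ex_RInt (fun z => phi z * g z) c e /\ RInt (fun z => phi z * g z) c e = RInt phi c e :> R).
  { intros c e Hce Hyc. apply RInt_ext_open; auto. 2: apply ex_RInt_phi.
    intros x Hx. rewrite H1 by lra. ring. }
  assert (Hzero : forall c e, c <= e -> e <= y ->
    ex_RInt (fun z => phi z * g z) c e /\ RInt (fun z => phi z * g z) c e = 0 :> R).
  { intros c e Hce Hey. rewrite <- (RInt_0 c e). apply RInt_ext_open; auto. 2: apply ex_RInt_0.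
    intros x Hx. rewrite H0 by lra. ring. }
  destruct (Rle_or_lt y a) as [Hya|Hay]; [|destruct (Rle_or_lt b y) as [Hby|Hyb]].
  - destruct (Hphi a b Hab Hya) as [E1 E2]. split; auto.
    rewrite E2, RInt_phi, !Rmax_left by lra. reflexivity.
  - destruct (Hzero a b Hab Hby) as [E1 E2]. split; auto.
    rewrite E2, !Rmax_right by lra. ring.
  - destruct (Hzero a y ltac:(lra) ltac:(lra)) as [E1 E2].
    destruct (Hphi y b ltac:(lra) ltac:(lra)) as [F1 F2].
    split; [apply (ex_RInt_Chasles _ a y b); auto|].
    rewrite <- (RInt_Chasles_R _ a y b E1 F1), E2, F2, RInt_phi.
    rewrite Rmax_left, Rmax_right by lra. ring.
Qed.

Lemma RInt_phi_step_down (g : R -> R) y :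
  (forall z, z < y -> g z = 1) -> (forall z, y < z -> g z = 0) ->
  forall a b, a <= b -> ex_RInt (fun z => phi z * g z) a b /\
    RInt (fun z => phi z * g z) a b = Phi0 (Rmin b y) - Phi0 (Rmin a y) :> R.
Proof.
  intros H1 H0 a b Hab.
  assert (Hphi : forall c e, c <= e -> e <= y ->
    ex_RInt (fun z => phi z * g z) c e /\ RInt (fun z => phi z * g z) c e = RInt phi c e :> R).
  { intros c e Hce Hey. apply RInt_ext_open; auto. 2: apply ex_RInt_phi.
    intros x Hx. rewrite H1 by lra. ring. }
  assert (Hzero : forall c e, c <= e -> y <= c ->
    ex_RInt (fun z => phi z * g z) c e /\ RInt (fun z => phi z * g z) c e = 0 :> R).
  { intros c e Hce Hyc. rewrite <- (RInt_0 c e). apply RInt_ext_open; auto. 2: apply ex_RInt_0.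
    intros x Hx. rewrite H0 by lra. ring. }
  destruct (Rle_or_lt b y) as [Hby|Hyb]; [|destruct (Rle_or_lt y a) as [Hya|Hay]].
  - destruct (Hphi a b Hab Hby) as [E1 E2]. split; auto.
    rewrite E2, RInt_phi, !Rmin_left by lra. reflexivity.
  - destruct (Hzero a b Hab Hya) as [E1 E2]. split; auto.
    rewrite E2, !Rmin_right by lra. ring.
  - destruct (Hphi a y ltac:(lra) ltac:(lra)) as [E1 E2].
    destruct (Hzero y b ltac:(lra) ltac:(lra)) as [F1 F2].
    split; [apply (ex_RInt_Chasles _ a y b); auto|].
    rewrite <- (RInt_Chasles_R _ a y b E1 F1), E2, F2, RInt_phi.
    rewrite (Rmin_right b y), (Rmin_left a y) by lra. ring.
Qed.

Lemma lim_pinfty_Phi0_max y : lim_pinfty (fun b => Phi0 (Rmax b y)) Phi0_inf.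
Proof.
  intros eps Heps. destruct (Phi0_lim_pinfty eps Heps) as [M HM]. exists (Rmax M y). intros x Hx.
  pose proof (Rmax_l M y); pose proof (Rmax_r M y). rewrite Rmax_left by lra. apply HM; lra.
Qed.

Lemma lim_minfty_Phi0_max y : lim_minfty (fun a => Phi0 (Rmax a y)) (Phi0 y).
Proof.
  intros eps Heps. exists y. intros x Hx. rewrite Rmax_right by lra.
  rewrite Rminus_diag, Rabs_R0; auto.
Qed.

Lemma lim_pinfty_Phi0_min y : lim_pinfty (fun b => Phi0 (Rmin b y)) (Phi0 y).
Proof.
  intros eps Heps. exists y. intros x Hx. rewrite Rmin_right by lra.
  rewrite Rminus_diag, Rabs_R0; auto.
Qed.

Lemma lim_minfty_Phi0_min y : lim_minfty (fun a => Phi0 (Rmin a y)) (- Phi0_inf).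
Proof.
  intros eps Heps. destruct (Phi0_lim_minfty eps Heps) as [M HM]. exists (Rmin M y). intros x Hx.
  pose proof (Rmin_l M y); pose proof (Rmin_r M y). rewrite Rmin_left by lra. apply HM; lra.
Qed.

Lemma is_int_R_upper_tail y : is_int_R (fun z => phi z * Defs.ind (y < z)) (gauss_tail y).
Proof.
  assert (Hstep := RInt_phi_step_up (fun z => Defs.ind (y < z)) y
    (fun z Hz => ind_true _ Hz) (fun z Hz => ind_false _ (Rlt_asym _ _ Hz))).
  apply is_int_R_of_primitive with (P := fun b => Phi0 (Rmax b y)) (Q := fun a => Phi0 (Rmax a y)).
  - apply Hstep.
  - apply Hstep.
  - apply lim_pinfty_Phi0_max.
  - apply lim_minfty_Phi0_max.
Qed.

Lemma is_int_R_two_tails (y : R) (P : R -> Prop) : 0 < y ->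
  (forall z, P z <-> (y <= z \/ z <= - y)) ->
  is_int_R (fun z => phi z * Defs.ind (P z)) (2 * gauss_tail y).
Proof.
  intros Hy HP.
  apply is_int_R_ext with (fun z => phi z * Defs.ind (y <= z) + phi z * Defs.ind (z <= - y)).
  { intros z. destruct (Rle_or_lt y z); [|destruct (Rle_or_lt z (- y))].
    - rewrite (ind_true (P z)), (ind_true (y <= z)), (ind_false (z <= - y)) by (rewrite ?HP; lra). ring.
    - rewrite (ind_true (P z)), (ind_false (y <= z)), (ind_true (z <= - y)) by (rewrite ?HP; lra). ring.
    - rewrite (ind_false (P z)), (ind_false (y <= z)), (ind_false (z <= - y)) by (rewrite ?HP; lra). ring. }
  assert (Hup := RInt_phi_step_up (fun z => Defs.ind (y <= z)) y
    (fun z Hz => ind_true _ (Rlt_le _ _ Hz)) (fun z Hz => ind_false _ (Rlt_not_le _ _ Hz))).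
  assert (Hdown := RInt_phi_step_down (fun z => Defs.ind (z <= - y)) (- y)
    (fun z Hz => ind_true _ (Rlt_le _ _ Hz)) (fun z Hz => ind_false _ (Rlt_not_le _ _ Hz))).
  replace (2 * gauss_tail y) with ((Phi0_inf + Phi0 (- y)) - (Phi0 y + - Phi0_inf))
    by (unfold gauss_tail; rewrite Phi0_odd; ring).
  apply is_int_R_of_primitive with (P := fun b => Phi0 (Rmax b y) + Phi0 (Rmin b (- y)))
                                   (Q := fun a => Phi0 (Rmax a y) + Phi0 (Rmin a (- y))).
  - intros a b Hab. apply (ex_RInt_plus (V:=R_NormedModule)); [apply Hup | apply Hdown]; auto.
  - intros a b Hab. rewrite (RInt_plus (V:=R_CompleteNormedModule)); [|apply Hup | apply Hdown]; auto.
    destruct (Hup a b Hab) as [_ ->]. destruct (Hdown a b Hab) as [_ ->]. simpl. unfold plus; simpl. ring.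
  - apply lim_pinfty_plus; [apply lim_pinfty_Phi0_max | apply lim_pinfty_Phi0_min].
  - apply lim_minfty_plus; [apply lim_minfty_Phi0_max | apply lim_minfty_Phi0_min].
Qed.

Lemma is_int_R_0 : is_int_R (fun _ => 0) 0.
Proof.
  assert (H : is_int_R (fun _ => 0) (0 - 0)).
  { apply is_int_R_of_primitive with (P := fun _ => 0) (Q := fun _ => 0).
    - intros; apply ex_RInt_0.
    - intros; rewrite RInt_0, Rminus_0_r; reflexivity.
    - intros eps Heps; exists 0; intros; rewrite Rminus_0_r, Rabs_R0; auto.
    - intros eps Heps; exists 0; intros; rewrite Rminus_0_r, Rabs_R0; auto. }
  now rewrite Rminus_0_r in H.
Qed.

(** * The chi-squared density and the conditional probabilities *)

Lemma exp_mult_nat (n : nat) (y : R) : exp (INR n * y) = exp y ^ n.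
Proof.
  induction n as [|n IH]; simpl.
  - rewrite Rmult_0_l, exp_0; auto.
  - rewrite <- IH, <- exp_plus. f_equal. destruct n; simpl; ring.
Qed.

(* From [1 + x <= exp x] at [x = u / (4 n)], raised to the [n]-th power. *)
Lemma pow_le_exp_quarter (n : nat) (u : R) : 0 <= u -> u ^ n <= (4 * INR n) ^ n * exp (u / 4).
Proof.
  intros Hu. destruct n as [|m].
  - simpl. pose proof (exp_ineq1_le (u/4)). lra.
  - set (n := S m). assert (Hn : 0 < INR n) by (apply lt_0_INR; unfold n; lia).
    replace (exp (u/4)) with (exp (u / (4 * INR n)) ^ n)
      by (rewrite <- exp_mult_nat; f_equal; field; lra).
    replace (u ^ n) with ((4 * INR n) ^ n * (u / (4 * INR n)) ^ n)
      by (rewrite <- Rpow_mult_distr; f_equal; field; lra).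
    apply Rmult_le_compat_l; [apply pow_le; lra|].
    apply pow_incr. split; [apply Rdiv_le_0_compat; lra|].
    pose proof (exp_ineq1_le (u / (4 * INR n))). lra.
Qed.

(* [chi n] is [chisq_unnorm (n + 2)]; shifting the index avoids truncated subtraction. *)
Definition chi (n : nat) (u : R) := sqrt u ^ n * exp (- u / 2).

Lemma chisq_unnorm_chi n : chisq_unnorm (n + 2) = chi n.
Proof.
  apply functional_extensionality. intros u. unfold chisq_unnorm, chi.
  now replace (n + 2 - 2)%nat with n by lia.
Qed.

Lemma chi_continuous n u : continuous (chi n) u.
Proof. unfold chi. continuity_R. Qed.

Lemma chi_nonneg n u : 0 <= chi n u.
Proof. apply Rmult_le_pos; [apply pow_le, sqrt_pos | left; apply exp_pos]. Qed.

Lemma chi_le_exp n u : 0 <= u -> chi n u <= (1 + (4 * INR n) ^ n) * exp (- u / 4).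
Proof.
  intros Hu. unfold chi.
  assert (HC : 0 <= (4 * INR n) ^ n) by (apply pow_le; pose proof (pos_INR n); lra).
  assert (Hsqrt : sqrt u ^ n <= 1 + (4 * INR n) ^ n * exp (u / 4)).
  { pose proof (exp_pos (u / 4)). destruct (Rle_or_lt (sqrt u) 1).
    - assert (sqrt u ^ n <= 1) by (rewrite <- (pow1 n); apply pow_incr; split; auto; apply sqrt_pos).
      nra.
    - assert (sqrt u ^ n <= u ^ n).
      { replace (u ^ n) with (sqrt u ^ (2 * n)) by (rewrite pow_mult, pow2_sqrt; auto).
        apply Rle_pow; lia || lra. }
      pose proof (pow_le_exp_quarter n u Hu). lra. }
  replace (exp (- u / 4)) with (exp (u / 4) * exp (- u / 2)) by (rewrite <- exp_plus; f_equal; field).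
  pose proof (exp_pos (- u / 2)). pose proof (exp_ineq1_le (u / 4)).
  assert (sqrt u ^ n <= (1 + (4 * INR n) ^ n) * exp (u / 4)) by nra.
  nra.
Qed.

Lemma RInt_exp_quarter b : RInt (fun u => exp (- u / 4)) 0 b = 4 - 4 * exp (- b / 4) :> R.
Proof.
  rewrite (RInt_derive_R (fun u => - 4 * exp (- u / 4))).
  - replace (- 0 / 4) with 0 by field. rewrite exp_0. ring.
  - intros x. auto_derive; auto. replace (- x * / 4) with (- x / 4) by field. field.
  - intros x. continuity_R.
Qed.

Lemma is_int_pos_chi n : exists N, is_int_pos (chi n) N /\ 0 < N.
Proof.
  set (C := 1 + (4 * INR n) ^ n).
  assert (HC : 0 < C) by (unfold C; pose proof (pow_le (4 * INR n) n ltac:(pose proof (pos_INR n); lra)); lra).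
  destruct (is_int_pos_of_bounded (chi n) (4 * C)) as [N HN].
  - intros; apply ex_RInt_continuous_R, chi_continuous.
  - intros; apply chi_nonneg.
  - intros b Hb. apply Rle_trans with (RInt (fun u => C * exp (- u / 4)) 0 b).
    + apply RInt_le; auto.
      * apply ex_RInt_continuous_R, chi_continuous.
      * apply ex_RInt_continuous_R. intros; continuity_R.
      * intros x Hx. apply chi_le_exp; lra.
    + rewrite RInt_scal_R, RInt_exp_quarter by (apply ex_RInt_continuous_R; intros; continuity_R).
      pose proof (exp_pos (- b / 4)). nra.
  - exists N. split; auto.
    apply Rlt_le_trans with (RInt (chi n) 0 2).
    + apply RInt_gt_0; [lra | | intros; apply chi_continuous].
      intros x Hx. apply Rmult_lt_0_compat; [apply pow_lt, sqrt_lt_R0; lra | apply exp_pos].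
    + apply RInt_le_is_int_pos; auto. intros; apply chi_nonneg. lra.
Qed.

Lemma is_int_pos_chi_mul n N (h : R -> R) K :
  is_int_pos (chi n) N -> (forall u, 0 <= u -> 0 <= h u <= K) ->
  (forall b, 0 <= b -> ex_RInt (fun u => chi n u * h u) 0 b) ->
  exists I, is_int_pos (fun u => chi n u * h u) I.
Proof.
  intros HN Hh Hex. apply is_int_pos_of_bounded with (K * N); auto.
  - intros x Hx. apply Rmult_le_pos; [apply chi_nonneg | apply Hh; auto].
  - intros b Hb. assert (HK : 0 <= K) by (destruct (Hh 0 ltac:(lra)); lra).
    apply Rle_trans with (RInt (fun u => K * chi n u) 0 b).
    + apply RInt_le; auto.
      * apply ex_RInt_continuous_R. intros. pose proof (chi_continuous n). continuity_R.
      * intros x Hx. destruct (Hh x ltac:(lra)). pose proof (chi_nonneg n x). nra.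
    + rewrite RInt_scal_R by (apply ex_RInt_continuous_R, chi_continuous).
      apply Rmult_le_compat_l; auto. apply (RInt_le_is_int_pos (chi n) N); auto.
      intros; apply chi_nonneg.
Qed.

Definition cond_prob_shift (delta c u : R) := gauss_tail (delta + sqrt u * c).

Definition cond_prob_square (delta u : R) :=
  Defs.ind (u >= delta ^ 2) * (2 * gauss_tail (2 * sqrt u)).

Lemma cond_prob_shift_continuous delta c u : continuous (cond_prob_shift delta c) u.
Proof. unfold cond_prob_shift. pose proof gauss_tail_continuous. continuity_R. Qed.

Lemma is_int_R_cond_prob_shift delta c u :
  is_int_R (fun z => phi z * Defs.ind (delta + sqrt u * c < z)) (cond_prob_shift delta c u).
Proof. apply is_int_R_upper_tail. Qed.

Lemma is_int_R_cond_prob_square delta u : 0 < delta -> 0 <= u ->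
  is_int_R (fun z => phi z * Defs.ind (/ 4 * z ^ 2 >= u /\ u >= delta ^ 2))
           (cond_prob_square delta u).
Proof.
  intros Hd Hu. unfold cond_prob_square. assert (Hd2 : 0 < delta ^ 2) by (apply pow_lt; auto).
  destruct (Rle_or_lt (delta ^ 2) u).
  - rewrite ind_true, Rmult_1_l by lra.
    assert (Hs : 0 < sqrt u) by (apply sqrt_lt_R0; lra).
    apply is_int_R_two_tails; [lra|].
    intros z. pose proof (sqrt_sqrt u Hu). split.
    + intros [H1 H2]. destruct (Rle_or_lt (2 * sqrt u) z); [left; auto|].
      destruct (Rle_or_lt z (- (2 * sqrt u))); [right; auto|]. nra.
    + intros [H1|H1]; split; nra.
  - rewrite ind_false, Rmult_0_l by lra.
    apply is_int_R_ext with (fun _ => 0); [|apply is_int_R_0].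
    intros z. rewrite ind_false by lra. ring.
Qed.

Lemma is_int_pos_chi_cond_prob_shift n N delta c :
  is_int_pos (chi n) N -> 0 <= delta -> 0 <= c ->
  exists I, is_int_pos (fun u => chi n u * cond_prob_shift delta c u) I.
Proof.
  intros HN Hd Hc. apply is_int_pos_chi_mul with N (gauss_tail 0); auto.
  - intros u Hu. split; [apply gauss_tail_nonneg|].
    apply gauss_tail_le_0. pose proof (sqrt_pos u). nra.
  - intros b Hb. apply ex_RInt_continuous_R. intros.
    pose proof (chi_continuous n). pose proof (cond_prob_shift_continuous delta c). continuity_R.
Qed.

Lemma is_int_pos_chi_cond_prob_square n N delta :
  is_int_pos (chi n) N -> 0 < delta ->
  exists I, is_int_pos (fun u => chi n u * cond_prob_square delta u) I.
Proof.
  intros HN Hd. assert (Hd2 : 0 < delta ^ 2) by (apply pow_lt; auto).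
  apply is_int_pos_chi_mul with N (2 * gauss_tail 0); auto.
  - intros u Hu. unfold cond_prob_square. pose proof (ind_bounds (u >= delta ^ 2)).
    pose proof (gauss_tail_nonneg (2 * sqrt u)).
    pose proof (gauss_tail_le_0 (2 * sqrt u) ltac:(pose proof (sqrt_pos u); lra)). split; nra.
  - (* the integrand vanishes below [delta^2] and is continuous above it *)
    assert (Hzero : forall a b, a <= b -> b <= delta ^ 2 ->
      ex_RInt (fun u => chi n u * cond_prob_square delta u) a b).
    { intros a b Hab Hb. apply (RInt_ext_open _ (fun _ => 0)); auto; [|apply ex_RInt_0].
      intros x Hx. unfold cond_prob_square. rewrite ind_false by lra. ring. }
    intros b Hb. destruct (Rle_or_lt b (delta ^ 2)); [apply Hzero; auto|].
    apply (ex_RInt_Chasles _ 0 (delta ^ 2) b); [apply Hzero; lra|].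
    apply (RInt_ext_open _ (fun u => chi n u * (2 * gauss_tail (2 * sqrt u)))); [lra| |].
    + intros x Hx. unfold cond_prob_square. rewrite ind_true by lra. ring.
    + apply ex_RInt_continuous_R. intros.
      pose proof (chi_continuous n). pose proof gauss_tail_continuous. continuity_R.
Qed.

Lemma is_prob_chi n (A : R -> R -> Prop) (h : R -> R) N I :
  is_int_pos (chi n) N -> 0 < N ->
  (forall u, 0 <= u -> is_int_R (fun z => phi z * Defs.ind (A z u)) (h u)) ->
  is_int_pos (fun u => chi n u * h u) I ->
  is_prob (n + 2) A (I / N).
Proof.
  intros HN HN0 Hh HI. exists N, h, I. rewrite chisq_unnorm_chi. auto.
Qed.

(** * The lower bound *)

Lemma chi_scale_ge n r v : 0 < r <= 1 -> 0 <= v -> r ^ n * chi n v <= chi n (r ^ 2 * v).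
Proof.
  intros Hr Hv. unfold chi.
  rewrite sqrt_mult, sqrt_pow2, Rpow_mult_distr by (try apply pow_le; lra).
  rewrite Rmult_assoc. apply Rmult_le_compat_l; [apply pow_le; lra|].
  apply Rmult_le_compat_l; [apply pow_le, sqrt_pos|].
  apply exp_le_exp. assert (r ^ 2 <= 1) by (rewrite <- (pow1 2); apply pow_incr; lra). nra.
Qed.

Lemma cond_prob_square_le_shift delta c r v : 0 < delta -> 0 <= r -> 0 <= c -> r * c <= 1 -> 0 <= v ->
  / 2 * cond_prob_square delta v <= cond_prob_shift delta c (r ^ 2 * v).
Proof.
  intros Hd Hr Hc Hrc Hv. unfold cond_prob_square, cond_prob_shift.
  destruct (Rle_or_lt (delta ^ 2) v).
  - rewrite ind_true by lra. replace (/ 2 * (1 * (2 * gauss_tail (2 * sqrt v)))) with (gauss_tail (2 * sqrt v)) by field.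
    apply gauss_tail_nonincreasing.
    rewrite sqrt_mult, sqrt_pow2 by (try apply pow_le; lra).
    assert (delta <= sqrt v) by (rewrite <- (sqrt_pow2 delta) by lra; apply sqrt_le_1_alt; auto).
    pose proof (sqrt_pos v). nra.
  - rewrite ind_false by lra. rewrite Rmult_0_l, Rmult_0_r. apply gauss_tail_nonneg.
Qed.

Lemma inv_le_1_sqrt_sq_sub_1 q : 1 <= q -> / q * sqrt (q ^ 2 - 1) <= 1.
Proof.
  intros Hq. assert (sqrt (q ^ 2 - 1) <= q).
  { rewrite <- (sqrt_pow2 q) at 2 by lra. apply sqrt_le_1_alt; lra. }
  apply Rmult_le_reg_l with q; [lra|]. rewrite <- Rmult_assoc, Rinv_r by lra. lra.
Qed.

Lemma chi_cond_prob_square_le_scaled n delta c r v : 0 < delta -> 0 < r <= 1 -> 0 <= c ->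
  r * c <= 1 -> 0 <= v ->
  / 2 * r ^ (n + 2) * (chi n v * cond_prob_square delta v) <=
  r ^ 2 * (chi n (r ^ 2 * v) * cond_prob_shift delta c (r ^ 2 * v)).
Proof.
  intros Hd Hr Hc Hrc Hv. rewrite pow_add.
  replace (/ 2 * (r ^ n * r ^ 2) * (chi n v * cond_prob_square delta v))
    with (r ^ 2 * ((r ^ n * chi n v) * (/ 2 * cond_prob_square delta v))) by ring.
  apply Rmult_le_compat_l; [apply pow_le; lra|].
  apply Rmult_le_compat.
  - apply Rmult_le_pos; [apply pow_le; lra | apply chi_nonneg].
  - apply Rmult_le_pos; [lra|]. apply Rmult_le_pos; [apply ind_bounds|].
    pose proof (gauss_tail_nonneg (2 * sqrt v)). lra.
  - apply chi_scale_ge; auto.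
  - apply cond_prob_square_le_shift; auto. lra.
Qed.

(* Substituting [u = v / q^2] compares the two outer integrals pointwise. *)
Lemma lower_bound_integral n I1 I2 delta q : 0 < delta -> 1 <= q ->
  is_int_pos (fun u => chi n u * cond_prob_square delta u) I1 ->
  is_int_pos (fun u => chi n u * cond_prob_shift delta (sqrt (q ^ 2 - 1)) u) I2 ->
  / 2 * (/ q) ^ (n + 2) * I1 <= I2.
Proof.
  intros Hd Hq H1 H2.
  set (r := / q).
  assert (Hr : 0 < r <= 1) by (split; [apply Rinv_0_lt_compat; lra | rewrite <- Rinv_1; apply Rinv_le_contravar; lra]).
  set (f := fun u => chi n u * cond_prob_shift delta (sqrt (q ^ 2 - 1)) u).
  assert (Hfc : forall u, continuous f u).
  { intros u. unfold f. pose proof (chi_continuous n).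
    pose proof (cond_prob_shift_continuous delta (sqrt (q ^ 2 - 1))). continuity_R. }
  apply (is_int_pos_scal_le _ _ H1); [apply Rmult_lt_0_compat; [lra | apply pow_lt; lra]|].
  intros b Hb. apply Rle_trans with (RInt f 0 (r ^ 2 * b)).
  - rewrite <- (RInt_comp_lin_R f (r ^ 2) b Hfc).
    rewrite <- RInt_scal_R by (apply (is_int_pos_ex_RInt _ _ H1); auto).
    apply RInt_le; auto.
    + apply (ex_RInt_scal (V:=R_NormedModule)). apply (is_int_pos_ex_RInt _ _ H1); auto.
    + apply ex_RInt_continuous_R. intros. apply (continuous_scal_r (V:=R_NormedModule)).
      apply (continuous_comp (fun y => r ^ 2 * y) f); [continuity_R | apply Hfc].
    + intros x Hx. unfold f. apply chi_cond_prob_square_le_scaled; auto.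
      * apply sqrt_pos.
      * apply inv_le_1_sqrt_sq_sub_1; auto.
      * lra.
  - apply (RInt_le_is_int_pos f I2 H2).
    + intros x Hx. apply Rmult_le_pos; [apply chi_nonneg | apply gauss_tail_nonneg].
    + apply Rmult_le_pos; [apply pow_le; lra | auto].
Qed.

(** * Gaussian moments *)

Definition gauss_mom (j : nat) (w : R) := w ^ j * exp (- w ^ 2 / 2).
Definition gauss_mom_int (j : nat) (b : R) : R := RInt (gauss_mom j) 0 b.

Lemma gauss_mom_continuous j w : continuous (gauss_mom j) w.
Proof. unfold gauss_mom. continuity_R. Qed.

Lemma ex_RInt_gauss_mom j a b : ex_RInt (gauss_mom j) a b.
Proof. apply ex_RInt_continuous_R, gauss_mom_continuous. Qed.

Lemma gauss_mom_nonneg j w : 0 <= w -> 0 <= gauss_mom j w.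
Proof. intros. apply Rmult_le_pos; [apply pow_le; auto | left; apply exp_pos]. Qed.

Lemma gauss_mom_int_nondecreasing j b b' : 0 <= b -> b <= b' ->
  gauss_mom_int j b <= gauss_mom_int j b'.
Proof.
  intros. apply RInt_nondecreasing; auto. apply ex_RInt_gauss_mom.
  intros; apply gauss_mom_nonneg; lra.
Qed.

Lemma RInt_comp_sq (g : R -> R) b : (forall u, continuous g u) ->
  RInt g 0 (b ^ 2) = RInt (fun w => 2 * w * g (w ^ 2)) 0 b :> R.
Proof.
  intros Hg.
  pose proof (RInt_comp (V:=R_CompleteNormedModule) g (fun w => w ^ 2) (fun w => 2 * w) 0 b) as E.
  simpl in E. replace (0 * (0 * 1)) with 0 in E by ring. replace (b * (b * 1)) with (b ^ 2) in E by ring.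
  rewrite <- E.
  - apply RInt_ext. intros x _. simpl. now replace (x * (x * 1)) with (x ^ 2) by ring.
  - intros; apply Hg.
  - intros x _. split; [auto_derive; auto; ring | continuity_R].
Qed.

Lemma RInt_chi_sq n b : 0 <= b -> RInt (chi n) 0 (b ^ 2) = 2 * gauss_mom_int (S n) b :> R.
Proof.
  intros Hb. rewrite RInt_comp_sq by apply chi_continuous.
  unfold gauss_mom_int. rewrite <- RInt_scal_R by apply ex_RInt_gauss_mom.
  apply RInt_ext. intros x Hx. rewrite Rmin_left, Rmax_right in Hx by lra.
  unfold chi, gauss_mom. rewrite sqrt_pow2 by lra. simpl. ring.
Qed.

Lemma gauss_mom_int_1 b : gauss_mom_int 1 b = 1 - exp (- b ^ 2 / 2).
Proof.
  unfold gauss_mom_int. rewrite (RInt_derive_R (fun w => - exp (- w ^ 2 / 2))).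
  - replace (- 0 ^ 2 / 2) with 0 by field. rewrite exp_0. ring.
  - intros x. unfold gauss_mom. auto_derive; auto.
    replace (- (x * (x * 1)) * / 2) with (- x ^ 2 / 2) by field. field.
  - apply gauss_mom_continuous.
Qed.

Lemma gauss_mom_int_1_bound M : (forall b, 0 <= b -> gauss_mom_int 1 b <= M) -> 1 <= M.
Proof.
  intros H. destruct (Rle_or_lt 1 M) as [|Hlt]; auto. exfalso.
  set (e := 1 - M). assert (He : 0 < e) by (unfold e; lra).
  (* at [b^2 = 2 / e] the defect [exp (- 1 / e)] is [< e] since [exp (1/e) > 1 + 1/e] *)
  specialize (H (sqrt (2 / e)) (sqrt_pos _)).
  rewrite gauss_mom_int_1, pow2_sqrt in H by (apply Rlt_le, Rdiv_lt_0_compat; lra).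
  replace (- (2 / e) / 2) with (- (1 / e)) in H by (field; lra).
  pose proof (exp_ineq1 (1 / e) ltac:(apply Rgt_not_eq, Rdiv_lt_0_compat; lra)).
  rewrite exp_Ropp in H.
  assert (Hinv : / exp (1 / e) < e).
  { apply Rmult_lt_reg_l with (exp (1 / e)); [apply exp_pos|].
    rewrite Rinv_r by apply Rgt_not_eq, exp_pos.
    apply Rlt_le_trans with (e * (1 + 1 / e)); [|nra].
    replace (e * (1 + 1 / e)) with (e + 1) by (field; lra). lra. }
  unfold e in *. lra.
Qed.

Lemma gauss_mom_int_0_bound b : 0 <= b -> gauss_mom_int 0 b <= 1 + exp (- 1 / 2).
Proof.
  intros Hb.
  assert (Hle1 : forall a, 0 <= a <= 1 -> RInt (gauss_mom 0) 0 a <= 1).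
  { intros a Ha. apply Rle_trans with (RInt (fun _ => 1) 0 a).
    - apply RInt_le; [lra | apply ex_RInt_gauss_mom | apply ex_RInt_continuous_R; intros; continuity_R |].
      intros w _. unfold gauss_mom. rewrite pow_O, Rmult_1_l, <- exp_0.
      apply exp_le_exp. pose proof (pow2_ge_0 w). lra.
    - rewrite RInt_const. change (scal (a - 0) 1) with ((a - 0) * 1). lra. }
  destruct (Rle_or_lt b 1); [pose proof (exp_pos (- 1 / 2)); unfold gauss_mom_int; pose proof (Hle1 b); lra|].
  (* beyond [1], [gauss_mom 0 <= gauss_mom 1] *)
  unfold gauss_mom_int. rewrite <- (RInt_Chasles_R (gauss_mom 0) 0 1 b) by apply ex_RInt_gauss_mom.
  assert (RInt (gauss_mom 0) 1 b <= RInt (gauss_mom 1) 1 b).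
  { apply RInt_le; [lra | apply ex_RInt_gauss_mom | apply ex_RInt_gauss_mom |].
    intros x Hx. unfold gauss_mom. rewrite pow_O, pow_1. pose proof (exp_pos (- x ^ 2 / 2)). nra. }
  assert (RInt (gauss_mom 1) 1 b = exp (- 1 / 2) - exp (- b ^ 2 / 2)).
  { pose proof (RInt_Chasles_R (gauss_mom 1) 0 1 b (ex_RInt_gauss_mom _ _ _) (ex_RInt_gauss_mom _ _ _)).
    fold (gauss_mom_int 1 b) (gauss_mom_int 1 1) in H1. rewrite !gauss_mom_int_1 in H1.
    replace (- 1 ^ 2 / 2) with (- 1 / 2) in H1 by field. lra. }
  pose proof (exp_pos (- b ^ 2 / 2)). pose proof (Hle1 1 ltac:(lra)). lra.
Qed.

Lemma gauss_mom_int_SS j b :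
  gauss_mom_int (S (S j)) b + b ^ S j * exp (- b ^ 2 / 2) = INR (S j) * gauss_mom_int j b.
Proof.
  (* integration by parts: [w^(j+1) e^(-w^2/2)] has derivative [(j+1) gauss_mom j - gauss_mom (j+2)] *)
  assert (E : RInt (fun w => INR (S j) * gauss_mom j w + (-1) * gauss_mom (S (S j)) w) 0 b
              = b ^ S j * exp (- b ^ 2 / 2) :> R).
  { rewrite (RInt_derive_R (fun w => w ^ S j * exp (- w ^ 2 / 2))).
    - simpl. rewrite !Rmult_0_l. ring.
    - intros x. unfold gauss_mom. auto_derive; auto.
      change (match j with 0%nat => 1 | S _ => INR j + 1 end) with (INR (S j)).
      replace (- (x * (x * 1)) * / 2) with (- x ^ 2 / 2) by field. simpl. field.
    - intros x. pose proof (gauss_mom_continuous j). pose proof (gauss_mom_continuous (S (S j))).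
      continuity_R. }
  rewrite (RInt_plus (V:=R_CompleteNormedModule)) in E
    by (apply (ex_RInt_scal (V:=R_NormedModule)), ex_RInt_gauss_mom).
  change (plus ?x ?y) with (x + y) in E.
  rewrite !RInt_scal_R in E by apply ex_RInt_gauss_mom. unfold gauss_mom_int. lra.
Qed.

Lemma gauss_mom_le_inv j b : (1 <= j)%nat -> 1 <= b ->
  b ^ j * exp (- b ^ 2 / 2) <= (4 * INR j) ^ j / b.
Proof.
  intros Hj Hb.
  pose proof (pow_le_exp_quarter j (b ^ 2) ltac:(apply pow_le; lra)) as P.
  assert (Hbj : b <= b ^ j) by (rewrite <- (pow_1 b) at 1; apply Rle_pow; auto).
  assert (Hbj0 : 0 < b ^ j) by (apply pow_lt; lra).
  replace ((b ^ 2) ^ j) with (b ^ j * b ^ j) in P by (rewrite <- pow_mult, <- pow_add; f_equal; lia).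
  assert (E2 : exp (b ^ 2 / 4) * exp (- b ^ 2 / 2) <= 1).
  { rewrite <- exp_plus, <- exp_0. apply exp_le_exp. pose proof (pow2_ge_0 b). lra. }
  pose proof (exp_pos (- b ^ 2 / 2)).
  assert (HC : 0 <= (4 * INR j) ^ j) by (apply pow_le; pose proof (pos_INR j); lra).
  assert (Hprod : b ^ j * (b ^ j * exp (- b ^ 2 / 2)) <= (4 * INR j) ^ j).
  { rewrite <- Rmult_assoc.
    apply Rle_trans with ((4 * INR j) ^ j * exp (b ^ 2 / 4) * exp (- b ^ 2 / 2));
      [apply Rmult_le_compat_r; lra | nra]. }
  apply Rle_trans with ((4 * INR j) ^ j / b ^ j).
  - apply Rmult_le_reg_l with (b ^ j); auto. field_simplify; lra.
  - apply Rmult_le_compat_l; auto. apply Rinv_le_contravar; lra.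
Qed.

(* AM-GM: [2 s w^(m+1) <= w^(m+2) + s^2 w^m]. *)
Lemma gauss_mom_amgm m s w : 0 < s -> 0 <= w ->
  gauss_mom (S m) w <= (gauss_mom (S (S m)) w / s + s * gauss_mom m w) / 2.
Proof.
  intros Hs Hw. unfold gauss_mom. simpl.
  assert (0 <= w ^ m) by (apply pow_le; auto). pose proof (exp_pos (- (w * (w * 1)) / 2)).
  set (E := exp (- (w * (w * 1)) / 2)) in *. set (P := w ^ m) in *.
  assert (0 <= P * E * (w - s) ^ 2 / s)
    by (apply Rmult_le_pos; [apply Rmult_le_pos; [nra | apply pow2_ge_0] | left; apply Rinv_0_lt_compat; auto]).
  apply Rle_trans with ((w * (w * P) * E / s + s * (P * E)) / 2 - P * E * (w - s) ^ 2 / s / 2);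
    [right; field; lra | lra].
Qed.

Lemma gauss_mom_int_S_le m b : 0 <= b ->
  gauss_mom_int (S m) b <=
  gauss_mom_int (S (S m)) b / sqrt (INR (S m)) + b ^ S m * exp (- b ^ 2 / 2) / (2 * sqrt (INR (S m))).
Proof.
  intros Hb. set (s := sqrt (INR (S m))).
  assert (Hs1 : 1 <= s) by (unfold s; rewrite <- sqrt_1; apply sqrt_le_1_alt; rewrite S_INR; pose proof (pos_INR m); lra).
  assert (Hs2 : s * s = INR (S m)) by (unfold s; apply sqrt_sqrt, pos_INR).
  assert (Hamgm : gauss_mom_int (S m) b <= (gauss_mom_int (S (S m)) b / s + s * gauss_mom_int m b) / 2).
  { unfold gauss_mom_int.
    apply Rle_trans with (RInt (fun w => / 2 * (/ s * gauss_mom (S (S m)) w) + / 2 * (s * gauss_mom m w)) 0 b).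
    - apply RInt_le; auto; [apply ex_RInt_gauss_mom | |].
      + apply ex_RInt_continuous_R. intros.
        pose proof (gauss_mom_continuous m). pose proof (gauss_mom_continuous (S (S m))). continuity_R.
      + intros x Hx. pose proof (gauss_mom_amgm m s x ltac:(lra) ltac:(lra)). lra.
    - rewrite (RInt_plus (V:=R_CompleteNormedModule))
        by (apply ex_RInt_continuous_R; intros;
            pose proof (gauss_mom_continuous m); pose proof (gauss_mom_continuous (S (S m))); continuity_R).
      change (plus ?x ?y) with (x + y).
      rewrite (RInt_scal_R (fun w => / s * gauss_mom (S (S m)) w)), (RInt_scal_R (fun w => s * gauss_mom m w))
        by (apply (ex_RInt_scal (V:=R_NormedModule)), ex_RInt_gauss_mom).
      rewrite !RInt_scal_R by apply ex_RInt_gauss_mom.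
      lra. }
  pose proof (gauss_mom_int_SS m b) as Hibp. rewrite <- Hs2 in Hibp.
  replace (gauss_mom_int m b) with ((gauss_mom_int (S (S m)) b + b ^ S m * exp (- b ^ 2 / 2)) / (s * s))
    in Hamgm by (rewrite Hibp; field; lra).
  apply Rle_trans with (1 := Hamgm). right. field. lra.
Qed.

Definition mom_ratio (n : nat) :=
  match n with O => 1 + exp (- 1 / 2) | S m => / sqrt (INR (S m)) end.

Lemma mom_ratio_pos n : 0 < mom_ratio n.
Proof.
  destruct n; unfold mom_ratio.
  - pose proof (exp_pos (- 1 / 2)). lra.
  - apply Rinv_0_lt_compat, sqrt_lt_R0, lt_0_INR. lia.
Qed.

Lemma gauss_mom_int_le n M : (forall b, 0 <= b -> gauss_mom_int (S n) b <= M) ->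
  forall b, 0 <= b -> gauss_mom_int n b <= mom_ratio n * M.
Proof.
  intros HM b Hb. destruct n as [|m].
  - pose proof (gauss_mom_int_1_bound M HM). pose proof (gauss_mom_int_0_bound b Hb).
    pose proof (exp_pos (- 1 / 2)). unfold mom_ratio. nra.
  - set (s := sqrt (INR (S m))).
    assert (Hs1 : 1 <= s) by (unfold s; rewrite <- sqrt_1; apply sqrt_le_1_alt; rewrite S_INR; pose proof (pos_INR m); lra).
    simpl mom_ratio. fold s.
    (* let [b' -> +oo] in [gauss_mom_int_S_le m b']: the boundary term decays like [1 / b'] *)
    assert (Heps : forall eps, 0 < eps -> gauss_mom_int (S m) b <= / s * M + eps).
    { intros eps Heps.
      set (C := (4 * INR (S m)) ^ S m).
      assert (HC : 0 <= C) by (unfold C; apply pow_le; pose proof (pos_INR (S m)); lra).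
      set (b' := Rmax b (Rmax 1 (C / eps)) + 1).
      pose proof (Rmax_l b (Rmax 1 (C / eps))). pose proof (Rmax_r b (Rmax 1 (C / eps))).
      pose proof (Rmax_l 1 (C / eps)). pose proof (Rmax_r 1 (C / eps)).
      assert (Hb' : 1 <= b' /\ b <= b' /\ C / eps < b') by (unfold b'; lra).
      pose proof (gauss_mom_int_nondecreasing (S m) b b' Hb ltac:(lra)).
      pose proof (gauss_mom_int_S_le m b' ltac:(lra)) as Hb'le. fold s in Hb'le.
      pose proof (HM b' ltac:(lra)).
      pose proof (gauss_mom_le_inv (S m) b' ltac:(lia) ltac:(lra)) as Hdecay. fold C in Hdecay.
      assert (C / b' < eps).
      { apply Rmult_lt_reg_r with b'; [lra|]. replace (C / b' * b') with C by (field; lra).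
        apply Rmult_lt_reg_r with (/ eps); [apply Rinv_0_lt_compat; auto|].
        replace (eps * b' * / eps) with b' by (field; lra). unfold Rdiv in Hb'. lra. }
      assert (0 <= b' ^ S m * exp (- b' ^ 2 / 2))
        by (apply Rmult_le_pos; [apply pow_le; lra | left; apply exp_pos]).
      assert (b' ^ S m * exp (- b' ^ 2 / 2) / (2 * s) <= b' ^ S m * exp (- b' ^ 2 / 2)).
      { unfold Rdiv. rewrite <- (Rmult_1_r (b' ^ S m * exp (- b' ^ 2 / 2))) at 2.
        apply Rmult_le_compat_l; auto. rewrite <- Rinv_1. apply Rinv_le_contravar; lra. }
      assert (gauss_mom_int (S (S m)) b' / s <= / s * M).
      { unfold Rdiv. rewrite Rmult_comm. apply Rmult_le_compat_l; auto.
        left; apply Rinv_0_lt_compat; lra. }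
      lra. }
    destruct (Rle_or_lt (gauss_mom_int (S m) b) (/ s * M)) as [|Hlt]; auto.
    specialize (Heps ((gauss_mom_int (S m) b - / s * M) / 2) ltac:(lra)). lra.
Qed.

(** * The upper bound *)

Lemma exp_neg_le_inv y : 0 < y -> exp (- y) <= exp (-1) / y.
Proof.
  intros Hy. pose proof (exp_ineq1_le (y - 1)).
  replace (exp (-1)) with (exp (y - 1) * exp (- y)) by (rewrite <- exp_plus; f_equal; ring).
  apply Rmult_le_reg_l with y; auto. replace (y * (exp (y - 1) * exp (- y) / y)) with (exp (y - 1) * exp (- y)) by (field; lra).
  apply Rmult_le_compat_r; [left; apply exp_pos | lra].
Qed.

(* Mills' bound, then [exp (- delta t w) <= exp (-1) / (delta t w)] to remove the cross term of [(delta + t w)^2]. *)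
Lemma gauss_tail_shift_le delta t w : 0 < delta -> 0 < t -> 0 < w ->
  gauss_tail (delta + w * t) <=
  exp (- delta ^ 2 / 2) * exp (-1) * exp (- t ^ 2 * w ^ 2 / 2) / (sqrt (2 * PI) * delta ^ 2 * t * w).
Proof.
  intros Hd Ht Hw.
  eapply Rle_trans; [apply gauss_tail_le_mills; nra|]. unfold phi.
  replace (exp (- (delta + w * t) ^ 2 / 2))
    with (exp (- delta ^ 2 / 2) * exp (- (delta * t * w)) * exp (- t ^ 2 * w ^ 2 / 2))
    by (rewrite <- !exp_plus; f_equal; field).
  pose proof (exp_neg_le_inv (delta * t * w) ltac:(apply Rmult_lt_0_compat; nra)).
  pose proof sqrt2PI_pos.
  pose proof (exp_pos (- delta ^ 2 / 2)). pose proof (exp_pos (- t ^ 2 * w ^ 2 / 2)).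
  pose proof (exp_pos (- (delta * t * w))).
  set (A := exp (- delta ^ 2 / 2)) in *. set (B := exp (- t ^ 2 * w ^ 2 / 2)) in *.
  set (C := exp (- (delta * t * w))) in *.
  apply Rle_trans with (A * C * B / sqrt (2 * PI) / delta).
  - unfold Rdiv. apply Rmult_le_compat_l.
    + apply Rmult_le_pos; [repeat apply Rmult_le_pos; lra | left; apply Rinv_0_lt_compat; auto].
    + apply Rinv_le_contravar; nra.
  - replace (A * exp (-1) * B / (sqrt (2 * PI) * delta ^ 2 * t * w))
      with (A * (exp (-1) / (delta * t * w)) * B / sqrt (2 * PI) / delta) by (field; repeat split; nra).
    unfold Rdiv. repeat apply Rmult_le_compat_r; try (left; apply Rinv_0_lt_compat; auto); try lra.
    apply Rmult_le_compat_l; lra.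
Qed.

Definition upper_const (delta t : R) :=
  exp (- delta ^ 2 / 2) * exp (-1) / (sqrt (2 * PI) * delta ^ 2 * t).

Lemma chi_cond_prob_shift_sq_le n delta q w : 0 < delta -> 1 < q -> 0 < w ->
  2 * w * (chi n (w ^ 2) * cond_prob_shift delta (sqrt (q ^ 2 - 1)) (w ^ 2)) <=
  2 * upper_const delta (sqrt (q ^ 2 - 1)) * (w ^ n * exp (- q ^ 2 * w ^ 2 / 2)).
Proof.
  intros Hd Hq Hw. set (t := sqrt (q ^ 2 - 1)).
  assert (Ht : 0 < t) by (apply sqrt_lt_R0; nra).
  assert (Ht2 : t ^ 2 = q ^ 2 - 1) by (unfold t; rewrite pow2_sqrt; nra).
  unfold chi, cond_prob_shift, upper_const. fold t. rewrite sqrt_pow2 by lra.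
  pose proof (gauss_tail_shift_le delta t w Hd Ht Hw) as Htail.
  replace (exp (- q ^ 2 * w ^ 2 / 2)) with (exp (- w ^ 2 / 2) * exp (- t ^ 2 * w ^ 2 / 2))
    by (rewrite <- exp_plus; f_equal; rewrite Ht2; field).
  assert (0 <= w ^ n) by (apply pow_le; lra). pose proof (exp_pos (- w ^ 2 / 2)).
  eapply Rle_trans.
  - apply Rmult_le_compat_l; [lra|]. apply Rmult_le_compat_l; [apply Rmult_le_pos; lra|]. exact Htail.
  - pose proof sqrt2PI_pos. right. field. repeat split; nra.
Qed.

Lemma RInt_gauss_mom_scaled n q b : 0 < q ->
  RInt (fun w => w ^ n * exp (- q ^ 2 * w ^ 2 / 2)) 0 b = (/ q) ^ S n * gauss_mom_int n (q * b) :> R.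
Proof.
  intros Hq. unfold gauss_mom_int.
  rewrite <- (RInt_comp_lin_R (gauss_mom n) q b (gauss_mom_continuous n)).
  rewrite <- RInt_scal_R.
  - apply RInt_ext. intros x _. unfold gauss_mom. rewrite Rpow_mult_distr.
    replace (- (q * x) ^ 2 / 2) with (- q ^ 2 * x ^ 2 / 2) by field.
    rewrite pow_inv. assert (q ^ n <> 0) by (apply pow_nonzero; lra).
    simpl. field. lra.
  - apply ex_RInt_continuous_R. intros. pose proof (gauss_mom_continuous n). continuity_R.
Qed.

Lemma upper_bound_integral n N I2 delta q : 0 < delta -> 1 < q ->
  is_int_pos (chi n) N ->
  is_int_pos (fun u => chi n u * cond_prob_shift delta (sqrt (q ^ 2 - 1)) u) I2 ->
  I2 <= upper_const delta (sqrt (q ^ 2 - 1)) * mom_ratio n * (/ q) ^ S n * N.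
Proof.
  intros Hd Hq HN HI2.
  set (K := upper_const delta (sqrt (q ^ 2 - 1))).
  assert (HK : 0 < K).
  { apply Rdiv_lt_0_compat; [apply Rmult_lt_0_compat; apply exp_pos|].
    apply Rmult_lt_0_compat; [apply Rmult_lt_0_compat; [apply sqrt2PI_pos | apply pow_lt; lra]|].
    apply sqrt_lt_R0; nra. }
  assert (Hmom : forall b, 0 <= b -> gauss_mom_int n b <= mom_ratio n * (N / 2)).
  { apply gauss_mom_int_le. intros b Hb.
    assert (RInt (chi n) 0 (b ^ 2) <= N).
    { apply (RInt_le_is_int_pos _ _ HN); [intros; apply chi_nonneg | apply pow2_ge_0]. }
    rewrite RInt_chi_sq in H by auto. lra. }
  pose proof (mom_ratio_pos n). assert (Hiq : 0 < (/ q) ^ S n) by (apply pow_lt, Rinv_0_lt_compat; lra).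
  apply (is_int_pos_le _ _ HI2). intros B HB.
  (* substitute [u = w^2] and bound the integrand pointwise *)
  rewrite <- (pow2_sqrt B HB). set (b := sqrt B). assert (Hb : 0 <= b) by apply sqrt_pos.
  set (f := fun u => chi n u * cond_prob_shift delta (sqrt (q ^ 2 - 1)) u).
  assert (Hf : forall u, continuous f u).
  { intros. unfold f. pose proof (chi_continuous n).
    pose proof (cond_prob_shift_continuous delta (sqrt (q ^ 2 - 1))). continuity_R. }
  rewrite RInt_comp_sq by apply Hf.
  apply Rle_trans with (RInt (fun w => 2 * K * (w ^ n * exp (- q ^ 2 * w ^ 2 / 2))) 0 b).
  - apply RInt_le; auto.
    + apply ex_RInt_continuous_R. intros. continuity_R.
    + apply ex_RInt_continuous_R. intros. continuity_R.
    + intros w Hw. apply chi_cond_prob_shift_sq_le; lra.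
  - rewrite RInt_scal_R, RInt_gauss_mom_scaled by (lra || (apply ex_RInt_continuous_R; intros; continuity_R)).
    pose proof (Hmom (q * b) ltac:(nra)).
    apply Rle_trans with (2 * K * ((/ q) ^ S n * (mom_ratio n * (N / 2)))); [|right; field].
    apply Rmult_le_compat_l; [lra|]. apply Rmult_le_compat_l; lra.
Qed.

Lemma exp_neg_half_le : exp (- 1 / 2) <= 16 / 25.
Proof.
  assert (H1 : exp (1/2) = exp (1/4) * exp (1/4)) by (rewrite <- exp_plus; f_equal; field).
  pose proof (exp_ineq1_le (1/4)).
  assert (H2 : exp (- 1 / 2) * exp (1 / 2) = 1)
    by (rewrite <- exp_plus; replace (-1/2 + 1/2) with 0 by field; apply exp_0).
  assert (25 / 16 <= exp (1/2)) by nra.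
  pose proof (exp_pos (-1/2)). nra.
Qed.

Lemma exp_sq_ge x : 0 <= x -> 1 + 2 * x + 3 / 2 * x ^ 2 <= exp x ^ 2.
Proof.
  intros Hx. replace (exp x ^ 2) with (exp (x / 2) ^ 4)
    by (rewrite <- !exp_mult_nat; f_equal; simpl; field).
  pose proof (exp_ineq1_le (x / 2)).
  assert ((1 + x/2) ^ 4 <= exp (x/2) ^ 4) by (apply pow_incr; lra).
  nra.
Qed.

Lemma mom_ratio_sq_bound n : 4 * exp (-1) * mom_ratio n ^ 2 * INR (n + 2) <= 9.
Proof.
  set (E := exp (- 1 / 2)). pose proof (exp_pos (- 1 / 2)). pose proof exp_neg_half_le. fold E in H, H0.
  replace (exp (-1)) with (E * E) by (unfold E; rewrite <- exp_plus; f_equal; field).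
  rewrite plus_INR. destruct n as [|m]; unfold mom_ratio; fold E.
  - replace (INR 0 + INR 2) with 2 by (simpl; ring).
    assert (E * (1 + E) <= 105 / 100) by nra.
    assert ((E * (1 + E)) ^ 2 <= (105 / 100) ^ 2) by (apply pow_incr; split; nra).
    nra.
  - set (s := sqrt (INR (S m))). assert (Hs : s * s = INR (S m)) by (unfold s; apply sqrt_sqrt, pos_INR).
    assert (Hs1 : 1 <= s * s) by (rewrite Hs, S_INR; pose proof (pos_INR m); lra).
    replace (INR (S m) + INR 2) with (s * s + 2) by (rewrite Hs; simpl; ring).
    replace (4 * (E * E) * (/ s) ^ 2 * (s * s + 2)) with (4 * (E * E) * (1 + 2 / (s * s))) by (field; nra).
    assert (2 / (s * s) <= 2).
    { apply Rmult_le_reg_r with (s * s); [lra|]. unfold Rdiv. rewrite Rmult_assoc, Rinv_l by lra. nra. }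
    assert (E * E <= (16 / 25) ^ 2) by nra.
    nra.
Qed.

(* With [q = exp x]: uses [q^2 - 1 >= 3/2 x^2] and [pi > 3]. *)
Lemma upper_const_mom_ratio_le n delta x : 0 < delta -> 0 < x ->
  upper_const delta (sqrt (exp x ^ 2 - 1)) * mom_ratio n <=
  exp (- (1 + delta ^ 2) / 2) / (2 * delta ^ 2 * sqrt (INR (n + 2)) * x).
Proof.
  intros Hd Hx. unfold upper_const.
  set (E := exp (- 1 / 2)). pose proof (exp_pos (- 1 / 2)). fold E in H.
  replace (exp (-1)) with (E * E) by (unfold E; rewrite <- exp_plus; f_equal; field).
  replace (exp (- (1 + delta ^ 2) / 2)) with (exp (- delta ^ 2 / 2) * E)
    by (unfold E; rewrite <- exp_plus; f_equal; field).
  set (t := sqrt (exp x ^ 2 - 1)).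
  pose proof (exp_sq_ge x ltac:(lra)).
  assert (Ht2 : t ^ 2 = exp x ^ 2 - 1) by (unfold t; rewrite pow2_sqrt; nra).
  assert (Ht : 0 < t) by (unfold t; apply sqrt_lt_R0; nra).
  assert (Htx : 3 / 2 * x ^ 2 <= t ^ 2) by nra.
  set (d := INR (n + 2)). assert (Hd2 : 2 <= d) by (unfold d; rewrite plus_INR; simpl; pose proof (pos_INR n); lra).
  set (sd := sqrt d). assert (Hsd : sd * sd = d) by (unfold sd; apply sqrt_sqrt; lra).
  assert (Hsd0 : 0 < sd) by (unfold sd; apply sqrt_lt_R0; lra).
  set (r := mom_ratio n). pose proof (mom_ratio_pos n) as Hr0. fold r in Hr0.
  pose proof (mom_ratio_sq_bound n) as Hr. fold r d in Hr.
  replace (exp (-1)) with (E * E) in Hr by (unfold E; rewrite <- exp_plus; f_equal; field).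
  assert (Hpi : 3 < PI) by (pose proof PI2_3_2; lra).
  assert (Hs2pi : sqrt (2 * PI) * sqrt (2 * PI) = 2 * PI) by (apply sqrt_sqrt; lra).
  pose proof sqrt2PI_pos.
  assert (Key : 2 * E * r * sd * x <= sqrt (2 * PI) * t).
  { apply Rsqr_incr_0_var; [|apply Rmult_le_pos; lra]. unfold Rsqr.
    replace (2 * E * r * sd * x * (2 * E * r * sd * x)) with (4 * (E * E) * r ^ 2 * d * x ^ 2)
      by (rewrite <- Hsd; ring).
    replace (sqrt (2 * PI) * t * (sqrt (2 * PI) * t)) with (sqrt (2 * PI) * sqrt (2 * PI) * t ^ 2) by ring.
    rewrite Hs2pi.
    assert (0 <= x ^ 2) by (apply pow_le; lra). nra. }
  pose proof (exp_pos (- delta ^ 2 / 2)). assert (0 < delta ^ 2) by (apply pow_lt; lra).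
  set (A := exp (- delta ^ 2 / 2)).
  apply Rle_trans with (A * E / (2 * delta ^ 2 * sd * x) * (2 * E * r * sd * x / (sqrt (2 * PI) * t))).
  - right. field. repeat split; nra.
  - rewrite <- (Rmult_1_r (A * E / (2 * delta ^ 2 * sd * x))) at 2. apply Rmult_le_compat_l.
    + apply Rlt_le, Rdiv_lt_0_compat; [apply Rmult_lt_0_compat; [apply exp_pos | lra] | repeat apply Rmult_lt_0_compat; lra].
    + apply Rmult_le_reg_r with (sqrt (2 * PI) * t); [nra|]. unfold Rdiv. rewrite Rmult_assoc, Rinv_l by nra. lra.
Qed.

Lemma upper_bound_ratio n N I2 delta q : 0 < delta -> 1 < q ->
  is_int_pos (chi n) N -> 0 < N ->
  is_int_pos (fun u => chi n u * cond_prob_shift delta (sqrt (q ^ 2 - 1)) u) I2 ->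
  I2 / N <= exp (- (1 + delta ^ 2) / 2) / (2 * delta ^ 2 * sqrt (INR (n + 2)) * ln q) * (/ q) ^ S n.
Proof.
  intros Hd Hq HN HN0 HI2.
  assert (Hx : 0 < ln q) by (rewrite <- ln_1; apply ln_increasing; lra).
  pose proof (upper_bound_integral n N I2 delta q Hd Hq HN HI2).
  pose proof (upper_const_mom_ratio_le n delta (ln q) Hd Hx) as Hconst. rewrite exp_ln in Hconst by lra.
  assert (Hiq : 0 < (/ q) ^ S n) by (apply pow_lt, Rinv_0_lt_compat; lra).
  apply Rmult_le_reg_r with N; auto. unfold Rdiv at 1. rewrite Rmult_assoc, Rinv_l, Rmult_1_r by lra.
  eapply Rle_trans; [eassumption|].
  apply Rmult_le_compat_r; [lra|]. apply Rmult_le_compat_r; [lra|]. exact Hconst.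
Qed.

Lemma Rpower_neg_nat_div (k p : R) (m : nat) : 0 < k ->
  Rpower k (- INR m / p) = (/ Rpower k (1 / p)) ^ m.
Proof.
  intros Hk. replace (- INR m / p) with (1 / p * - INR m) by (unfold Rdiv; ring).
  rewrite <- Rpower_mult, Rpower_Ropp, Rpower_pow, pow_inv by (unfold Rpower; apply exp_pos).
  reflexivity.
Qed.

Lemma Rpower_ge_1 (k e : R) : 1 <= k -> 0 <= e -> 1 <= Rpower k e.
Proof.
  intros Hk He. pose proof (Rle_Rpower k 0 e Hk He). now rewrite Rpower_O in H by lra.
Qed.

Lemma Rpower_gt_1 (k e : R) : 1 < k -> 0 < e -> 1 < Rpower k e.
Proof.
  intros Hk He. pose proof (Rpower_lt k 0 e Hk He). now rewrite Rpower_O in H by lra.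
Qed.

Lemma lower_bound_ratio n N I1 I2 delta q : 0 < delta -> 1 <= q -> 0 < N ->
  is_int_pos (fun u => chi n u * cond_prob_square delta u) I1 ->
  is_int_pos (fun u => chi n u * cond_prob_shift delta (sqrt (q ^ 2 - 1)) u) I2 ->
  / 2 * (I1 / N) * (/ q) ^ (n + 2) <= I2 / N.
Proof.
  intros Hd Hq HN0 HI1 HI2.
  pose proof (lower_bound_integral n I1 I2 delta q Hd Hq HI1 HI2).
  replace (/ 2 * (I1 / N) * (/ q) ^ (n + 2)) with (/ 2 * (/ q) ^ (n + 2) * I1 / N) by (field; lra).
  apply Rmult_le_compat_r; [left; apply Rinv_0_lt_compat|]; auto.
Qed.

Lemma upper_bound_rhs_Rpower n delta p k : 0 < delta -> 0 < p -> 1 < k ->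
  exp (- (1 + delta ^ 2) / 2) * p / (2 * delta ^ 2 * sqrt (INR (n + 2)))
    * (Rpower k ((1 - INR (n + 2)) / p) / ln k)
  = exp (- (1 + delta ^ 2) / 2) / (2 * delta ^ 2 * sqrt (INR (n + 2)) * ln (Rpower k (1 / p)))
    * (/ Rpower k (1 / p)) ^ S n.
Proof.
  intros Hd Hp Hk.
  replace ((1 - INR (n + 2)) / p) with (- INR (S n) / p) by (rewrite plus_INR, S_INR; simpl; field; lra).
  rewrite Rpower_neg_nat_div, ln_Rpower by lra.
  assert (0 < ln k) by (rewrite <- ln_1; apply ln_increasing; lra).
  assert (0 < sqrt (INR (n + 2))) by (apply sqrt_lt_R0, lt_0_INR; lia).
  field. repeat split; lra.
Qed.

Theorem proposition1 (d : nat) (hd : (2 <= d)%nat) (delta p : R)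
  (hdelta : 0 < delta) (hp : 0 < p) (k : nat) (hk : (1 <= k)%nat) :
  exists l1 l2 : R,
    is_prob d (fun z u => / 4 * z ^ 2 >= u /\ u >= delta ^ 2) l1 /\
    is_prob d (fun z u =>
      delta + sqrt u * sqrt (Rpower (INR k) (2 / p) - 1) < z) l2 /\
    / 2 * l1 * Rpower (INR k) (- INR d / p) <= l2 /\
    ((2 <= k)%nat ->
      l2 <= exp (- (1 + delta ^ 2) / 2) * p / (2 * delta ^ 2 * sqrt (INR d))
            * (Rpower (INR k) ((1 - INR d) / p) / ln (INR k))).
Proof.
  replace d with (d - 2 + 2)%nat by lia. set (n := (d - 2)%nat).
  assert (Hk : 1 <= INR k) by (apply (le_INR 1) in hk; auto).
  set (q := Rpower (INR k) (1 / p)).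
  assert (Hq : 1 <= q) by (apply Rpower_ge_1; [|apply Rlt_le, Rdiv_lt_0_compat]; lra).
  replace (Rpower (INR k) (2 / p)) with (q ^ 2)
    by (unfold q; rewrite <- Rpower_pow, Rpower_mult by (unfold Rpower; apply exp_pos); f_equal; simpl; field; lra).
  destruct (is_int_pos_chi n) as [N [HN HN0]].
  destruct (is_int_pos_chi_cond_prob_square n N delta HN hdelta) as [I1 HI1].
  destruct (is_int_pos_chi_cond_prob_shift n N delta (sqrt (q ^ 2 - 1)) HN ltac:(lra) (sqrt_pos _))
    as [I2 HI2].
  exists (I1 / N), (I2 / N). split; [|split; [|split]].
  - apply (is_prob_chi n _ (cond_prob_square delta)); auto.
    intros u Hu. apply is_int_R_cond_prob_square; auto.
  - apply (is_prob_chi n _ (cond_prob_shift delta (sqrt (q ^ 2 - 1)))); auto.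
    intros u Hu. apply is_int_R_cond_prob_shift.
  - rewrite Rpower_neg_nat_div by lra. apply (lower_bound_ratio n N I1 I2 delta q); auto.
  - intros Hk2. assert (Hk1 : 1 < INR k) by (apply (lt_INR 1) in Hk2; auto).
    rewrite upper_bound_rhs_Rpower by auto.
    apply upper_bound_ratio; auto. apply Rpower_gt_1; [|apply Rdiv_lt_0_compat]; lra.
Qed.
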